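(* The class of split graphs is degree sandwich monotone; that is, for every split graph $G$ and every set $F\subseteq E(G)$ such that $G-F$ is a split graph, every degree-minimal edge $e$ in $F$ satisfies that $G-e$ is a split graph.
   Context: A split graph is a graph whose vertex set can be partitioned into a clique and an independent set. Given a graph $G$ and $F\subseteq E(G)$, an edge $e\in F$ is degree-minimal in $F$ if its endpoints can be named $u,v$ so that (i) $u$ has the smallest degree in $G$ among all vertices incident to an edge of $F$, and (ii) $v$ has the smallest degree in $G$ among all vertices $w$ with $uw\in F$. *)

From mathcomp Require Import all_boot.
Set Implicit Arguments. Unset Strict Implicit. Unset Printing Implicit Defensive.

(* A set of edges F ⊆ E(G) is represented by a symmetric relation
   F : rel T with F x y -> g x y. *)

Definition simple_graph (T : finType) (g : rel T) : Prop :=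
  symmetric g /\ irreflexive g.

Definition deg (T : finType) (g : rel T) (x : T) : nat := #|[set y | g x y]|.

Definition is_split (T : finType) (g : rel T) : Prop :=
  exists K : {set T},
    (forall x y, x \in K -> y \in K -> x != y -> g x y) /\
    (forall x y, x \notin K -> y \notin K -> ~~ g x y).

Definition remove_edges (T : finType) (g F : rel T) : rel T :=
  fun x y => g x y && ~~ F x y.

Definition remove_edge (T : finType) (g : rel T) (u v : T) : rel T :=
  fun x y => g x y && ~~ (((x == u) && (y == v)) || ((x == v) && (y == u))).

Definition degree_minimal (T : finType) (g F : rel T) (u v : T) : Prop :=
  [/\ F u v,
      (forall w z, F w z -> deg g u <= deg g w) &
      (forall w, F u w -> deg g v <= deg g w)].

From mathcomp Require Import all_boot.
Set Implicit Arguments. Unset Strict Implicit. Unset Printing Implicit Defensive.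

(* Take a split partition (K, ~: K) of G with |K| maximum.  Every vertex
   outside K then misses some vertex of K, so it has degree < |K|, while a
   vertex of K with a neighbour outside K has degree >= |K|.  If uv is not
   inside K, or an end of uv has no neighbour outside K (and can move to the
   independent side), G - uv is split.  Otherwise deg u >= |K|, so by
   degree-minimality both ends of every edge of F have degree >= |K|, hence
   lie in K.  Let (K', ~: K') split G - F; one end x of uv is not in K', and
   x has a neighbour c outside K.  Then c is in K', and a vertex w of K
   missing c is not in K', so wx is in F; but every neighbour of w lies in K,
   so deg w < |K|, a contradiction. *)

Section SplitPartition.

Variable T : finType.
Implicit Types (g : rel T) (K : {set T}).

Definition split_partition g K : bool :=
  [forall x in K, forall y in K, (x != y) ==> g x y] &&
  [forall x in ~: K, forall y in ~: K, ~~ g x y].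

Lemma split_partitionP g K :
  reflect
    ((forall x y, x \in K -> y \in K -> x != y -> g x y) /\
     (forall x y, x \notin K -> y \notin K -> ~~ g x y))
    (split_partition g K).
Proof.
apply: (iffP andP).
  case=> /forall_inP Kc /forall_inP Ki; split=> x y xK yK.
    by move: (Kc x xK) => /forall_inP/(_ y yK)/implyP.
  by move: (Ki x); rewrite inE => /(_ xK)/forall_inP; apply; rewrite inE.
case=> Kc Ki; split; apply/forall_inP => x xK; apply/forall_inP => y yK.
  by apply/implyP; apply: Kc.
by move: xK yK; rewrite !inE; apply: Ki.
Qed.

Lemma is_splitP g : is_split g <-> exists K, split_partition g K.
Proof.
by split=> -[K HK]; exists K; apply/split_partitionP.
Qed.

Lemma exists_max_split_partition g :
  is_split g -> exists2 K, split_partition g K &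
    forall K', split_partition g K' -> #|K'| <= #|K|.
Proof.
case/is_splitP => K0 HK0.
by case: (arg_maxnP (fun K => #|K|) HK0) => K; exists K.
Qed.

Lemma deg_lt_card g (A : {set T}) (y w : T) :
  (forall z, g y z -> z \in A) -> w \in A -> ~~ g y w -> deg g y < #|A|.
Proof.
move=> nbrA wA ngyw; rewrite /deg (cardsD1 w A) wA ltnS.
apply/subset_leq_card/subsetP => z; rewrite !inE => gyz.
by rewrite nbrA // andbT; apply: contraNneq ngyw => <-.
Qed.

Lemma card_le_deg g K (y a : T) :
  (forall x z, x \in K -> z \in K -> x != z -> g x z) ->
  y \in K -> a \notin K -> g y a -> #|K| <= deg g y.
Proof.
move=> Kc yK aK gya; rewrite /deg (cardsD1 y K) yK.
have -> : 1 + #|K :\ y| = #|a |: (K :\ y)|.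
  by rewrite cardsU1 !inE (negbTE aK) andbF.
apply/subset_leq_card/subsetP => z; rewrite !inE.
by case/predU1P => [-> // | /andP [zy zK]]; rewrite Kc // eq_sym.
Qed.

Lemma split_partition_remove_edge g K (u v : T) :
  split_partition g K -> ~~ ((u \in K) && (v \in K)) ->
  split_partition (remove_edge g u v) K.
Proof.
case/split_partitionP => Kc Ki uvK; apply/split_partitionP; split.
- move=> x y xK yK xy; rewrite /remove_edge Kc //=.
  by apply: contra uvK => /orP [] /andP [/eqP <- /eqP <-]; rewrite ?xK ?yK.
- by move=> x y xK yK; rewrite /remove_edge negb_and Ki.
Qed.

End SplitPartition.

Section MaxSplitPartition.

Variables (T : finType) (g : rel T).
Hypothesis g_simple : simple_graph g.

Lemma split_partitionD1 (K : {set T}) (x : T) :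
  split_partition g K -> (forall a, a \notin K -> ~~ g x a) ->
  split_partition g (K :\ x).
Proof.
case: g_simple => gsym girr /split_partitionP [Kc Ki] xK; apply/split_partitionP.
split=> [y z | y z]; rewrite !inE.
  by case/andP => _ yK /andP [_ zK]; apply: Kc.
rewrite !negb_and !negbK.
case/orP => [/eqP -> | yK]; case/orP => [/eqP -> | zK].
- by rewrite girr.
- exact: xK.
- by rewrite gsym; apply: xK.
- exact: Ki.
Qed.

Variable K : {set T}.
Hypothesis K_split : split_partition g K.
Hypothesis K_max : forall K' : {set T}, split_partition g K' -> #|K'| <= #|K|.

Lemma max_split_partition_nonadj (c : T) :
  c \notin K -> exists2 w, w \in K & ~~ g c w.
Proof.
case: g_simple => gsym _; move/split_partitionP: K_split => [Kc Ki] cK.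
have [/forall_inP call | ] := boolP [forall w in K, g c w]; last first.
  by rewrite negb_forall_in => /exists_inP.
suff /K_max : split_partition g (c |: K) by rewrite cardsU1 cK ltnn.
apply/split_partitionP; split=> [x y | x y]; rewrite !inE; last first.
  by rewrite !negb_or => /andP [_ xK] /andP [_ yK]; apply: Ki.
case/predU1P => [-> | xK]; case/predU1P => [-> | yK]; rewrite ?eqxx //.
- by move=> _; apply: call.
- by move=> _; rewrite gsym; apply: call.
- exact: Kc.
Qed.

Lemma max_split_partition_deg_out (y : T) : y \notin K -> deg g y < #|K|.
Proof.
move=> yK; have [w wK ngyw] := max_split_partition_nonadj yK.
apply: (deg_lt_card _ wK ngyw) => z gyz.
move/split_partitionP: K_split => [_ Ki].
by apply: contraTT gyz => zK; apply: Ki.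
Qed.

Variables (F : rel T) (K' : {set T}).
Hypothesis F_sym : symmetric F.
Hypothesis F_deg : forall x y, F x y -> #|K| <= deg g x.
Hypothesis K'_split : split_partition (remove_edges g F) K'.

Lemma F_edge_in_K x y : F x y -> x \in K.
Proof.
move=> Fxy; apply: contraTT (F_deg Fxy) => xK.
by rewrite -ltnNge max_split_partition_deg_out.
Qed.

Lemma dropped_vertex_outer_nonadj (x c : T) :
  x \in K -> x \notin K' -> c \notin K -> ~~ g x c.
Proof.
case: g_simple => gsym girr; move/split_partitionP: K_split => [Kc Ki].
move/split_partitionP: K'_split => [K'c K'i] xK xK' cK.
apply/negP => gxc.
have ncx : ~~ F x c by apply: contra cK; rewrite F_sym => /F_edge_in_K.
have cK' : c \in K'.
  apply: contraTT ncx => cK'.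
  by move: (K'i x c xK' cK'); rewrite /remove_edges gxc.
have [w wK ngcw] := max_split_partition_nonadj cK.
have cw : c != w by apply: contraTneq wK => <-.
have wK' : w \notin K'.
  by apply: contra ngcw => wK'; case/andP: (K'c c w cK' wK' cw).
have Fwx : F w x.
  have wx : w != x by apply: contraNneq ngcw => ->; rewrite gsym.
  by move: (K'i w x wK' xK'); rewrite /remove_edges Kc // negbK.
have nbrw : forall d, g w d -> d \in K.
  move=> d gwd; apply: contraT => dK.
  have dK' : d \notin K'.
    apply: contra (Ki c d cK dK) => dK'.
    have cd : c != d by apply: contraNneq ngcw => ->; rewrite gsym.
    by case/andP: (K'c c d cK' dK' cd).
  move: (K'i w d wK' dK'); rewrite /remove_edges gwd negbK.
  by rewrite F_sym => /F_edge_in_K; rewrite (negbTE dK).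
have := deg_lt_card nbrw wK (negbT (girr w)).
by rewrite ltnNge (F_deg Fwx).
Qed.

End MaxSplitPartition.

Theorem theorem4p1 (T : finType) (g : rel T) (F : rel T) :
  simple_graph g -> is_split g ->
  symmetric F -> (forall x y, F x y -> g x y) ->
  is_split (remove_edges g F) ->
  forall u v : T, degree_minimal g F u v ->
  is_split (remove_edge g u v).
Proof.
move=> g_simple /exists_max_split_partition [K K_split K_max] F_sym F_sub.
case/is_splitP => K' K'_split u v [Fuv Fmin _]; apply/is_splitP.
have [/andP [uK vK] | uvK] := boolP ((u \in K) && (v \in K)); last first.
  by exists K; apply: split_partition_remove_edge.
have [/forall_inP uout | ] := boolP [forall a in ~: K, ~~ g u a].
  exists (K :\ u); apply: split_partition_remove_edge; last by rewrite !inE eqxx.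
  by apply: split_partitionD1 => // a aK; apply: uout; rewrite inE.
rewrite negb_forall_in => /exists_inP [a]; rewrite inE negbK => aK gua.
have [/forall_inP vout | ] := boolP [forall b in ~: K, ~~ g v b].
  exists (K :\ v); apply: split_partition_remove_edge; last by rewrite !inE eqxx andbF.
  by apply: split_partitionD1 => // b bK; apply: vout; rewrite inE.
rewrite negb_forall_in => /exists_inP [b]; rewrite inE negbK => bK gvb.
have F_deg x y : F x y -> #|K| <= deg g x.
  move=> Fxy; apply: leq_trans (Fmin _ _ Fxy).
  by apply: (card_le_deg _ uK aK gua); case/split_partitionP: K_split.
have outer_nonadj :=
  dropped_vertex_outer_nonadj g_simple K_split K_max F_sym F_deg K'_split.
have [uK' | uK'] := boolP (u \in K'); last first.
  by rewrite (negbTE (outer_nonadj u a uK uK' aK)) in gua.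
have [vK' | vK'] := boolP (v \in K'); last first.
  by rewrite (negbTE (outer_nonadj v b vK vK' bK)) in gvb.
case/split_partitionP: K'_split => K'c _.
have uv : u != v by apply: contraTneq (F_sub _ _ Fuv) => ->; case: g_simple => _ ->.
by move: (K'c u v uK' vK' uv); rewrite /remove_edges Fuv andbF.
Qed.
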